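(* Let $\mathfrak{l}$ be a finite-dimensional restricted Lie algebra over an algebraically closed field $\mathbb{K}$ of characteristic $p$ with prime subfield $\mathbb{F}$, and let $\chi\in\mathfrak{l}^\ast$ be arbitrary. Then $u(\mathfrak{l}_\chi)$ is isomorphic as an algebra to $\bigoplus_{i\in\mathbb{F}}U_{i\chi}(\mathfrak{l})$.
   Context: $\mathfrak{l}_\chi=\mathfrak{l}\oplus\mathbb{K}c$ is the restricted Lie algebra with bracket $[a+\alpha c,b+\beta c]=[a,b]$ and $p$-map $(a+\alpha c)^{[p]}=a^{[p]}+(\chi(a)^p+\alpha^p)c$; $u(\cdot)$ is the restricted enveloping algebra. For $\xi\in\mathfrak{l}^\ast$, the reduced enveloping algebra $U_\xi(\mathfrak{l})$ is the quotient of the universal enveloping algebra $U(\mathfrak{l})$ by the ideal generated by $x^p-x^{[p]}-\xi(x)^p\cdot 1$ for all $x\in\mathfrak{l}$. *)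

From HB Require Import structures.
From mathcomp Require Import all_boot all_order all_algebra.
Set Implicit Arguments. Unset Strict Implicit. Unset Printing Implicit Defensive.
Import Order.TTheory GRing.Theory.
Local Open Scope ring_scope.

Section RestrictedLie.
Variables (K : fieldType) (p : nat) (V : vectType K).

Definition is_lie_bracket (br : V -> V -> V) : Prop :=
  [/\ (forall a x y z, br (a *: x + y) z = a *: br x z + br y z),
      (forall a x y z, br z (a *: x + y) = a *: br z x + br z y),
      (forall x, br x x = 0) &
      (forall x y z, br x (br y z) + br y (br z x) + br z (br x y) = 0)].

Definition ad_word (br : V -> V -> V) (x y : V) (w : {ffun 'I_p.-1 -> bool}) : V :=
  foldr (fun u acc => br u acc) x [seq (if w j then x else y) | j <- enum 'I_p.-1].

(** Jacobson's s_i(x,y), 1 <= i <= p-1, defined by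
    ad(t x + y)^(p-1)(x) = \sum_i i s_i(x,y) t^(i-1). *)
Definition jacobson_s (br : V -> V -> V) (i : nat) (x y : V) : V :=
  (i%:R)^-1 *: \sum_(w : {ffun 'I_p.-1 -> bool} | count id (fgraph w) == i.-1)
                  ad_word br x y w.

Definition is_restricted (br : V -> V -> V) (pm : V -> V) : Prop :=
  [/\ is_lie_bracket br,
      (forall x y, br (pm x) y = iter p (br x) y),
      (forall (a : K) x, pm (a *: x) = a ^+ p *: pm x) &
      (forall x y, pm (x + y) = pm x + pm y + \sum_(1 <= i < p) jacobson_s br i x y)].

Definition is_alg_hom (A B : algType K) (h : A -> B) : Prop :=
  [/\ (forall a u v, h (a *: u + v) = a *: h u + h v),
      (forall u v, h (u * v) = h u * h v) & h 1 = 1].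

Definition env_map (br : V -> V -> V) (A : algType K) (f : V -> A) : Prop :=
  (forall a x y, f (a *: x + y) = a *: f x + f y) /\
  (forall x y, f (br x y) = f x * f y - f y * f x).

Definition reduced_rel (pm : V -> V) (xi : V -> K) (A : algType K) (f : V -> A) : Prop :=
  forall x, f x ^+ p - f (pm x) = (xi x ^+ p)%:A.

(** (A, f) is the reduced enveloping algebra U_xi(V), i.e. U(V) modulo the ideal
    generated by x^p - x^[p] - xi(x)^p 1, characterised by its universal property.
    For xi = 0 this is the restricted enveloping algebra u(V). *)
Definition is_reduced_env (br : V -> V -> V) (pm : V -> V) (xi : V -> K)
    (A : algType K) (f : V -> A) : Prop :=
  [/\ env_map br f, reduced_rel pm xi f &
      forall (B : algType K) (g : V -> B), env_map br g -> reduced_rel pm xi g ->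
        exists h : A -> B, [/\ is_alg_hom h, (forall x, h (f x) = g x) &
          forall h' : A -> B, is_alg_hom h' -> (forall x, h' (f x) = g x) ->
            forall u, h' u = h u]].

End RestrictedLie.

(** The central extension l_chi = l (+) K c, as the vector space V * K. *)
Section Lchi.
Variables (K : fieldType) (p : nat) (V : vectType K).
Variables (br : V -> V -> V) (pm : V -> V) (chi : V -> K).

Definition br_chi (u v : (V * K^o)%type) : (V * K^o)%type := (br u.1 v.1, 0).
Definition pm_chi (u : (V * K^o)%type) : (V * K^o)%type :=
  (pm u.1, chi u.1 ^+ p + u.2 ^+ p).
End Lchi.

From HB Require Import structures.
From mathcomp Require Import all_boot all_order all_algebra ring.
From Stdlib Require Import IndefiniteDescription.
Import GRing.Theory.
Local Open Scope ring_scope.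
Set Implicit Arguments. Unset Strict Implicit. Unset Printing Implicit Defensive.

(* The central element z = f (0, 1) of u(l_chi) satisfies z^p = z, so evaluating at z the
   Lagrange polynomials E_i = 1 - (X - i)^(p-1) of the prime field gives idempotents e_i,
   pairwise orthogonal, commuting with the generators, summing to 1 and with z e_i = i e_i.
   Specialising c to i gives algebra maps Phi_i : u(l_chi) -> U_{i chi}(l), and x |-> e_i x
   gives maps Psi_i : U_{i chi}(l) -> e_i u(l_chi) e_i into the corner algebras.  By the
   universal properties, Phi_i o Psi_i = id and a |-> sum_i Psi_i (Phi_i a) is the identity
   of u(l_chi), so (Phi_i)_i is an isomorphism onto the product of the U_{i chi}(l). *)

Section PrimeSubfield.
Variables (K : fieldType) (p : nat).
Hypothesis pcharK : p \in [pchar K].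

Let p_gt1 : (1 < p)%N := prime_gt1 (pcharf_prime pcharK).

Lemma natr_Fp_inj (i j : 'I_p) : (i%:R : K) = j%:R -> i = j.
Proof.
wlog le_ij : i j / (i <= j)%N => [hw eq_ij|eq_ij].
  by case/orP: (leq_total i j) => /hw; [apply | move/(_ (esym eq_ij))/esym].
have : (p %| j - i)%N by rewrite (dvdn_pcharf pcharK) natrB // eq_ij subrr.
rewrite /dvdn modn_small; last exact: leq_ltn_trans (leq_subr _ _) (ltn_ord j).
by rewrite subn_eq0 => le_ji; apply/val_inj/eqP; rewrite eqn_leq le_ij.
Qed.

Lemma natr_expp n : (n%:R : K) ^+ p = n%:R.
Proof. by rewrite -(pFrobenius_autE pcharK) pFrobenius_aut_nat. Qed.

Definition lagrange_Fp (i : nat) : {poly K} := 1 - ('X - i%:R%:P) ^+ p.-1.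

Lemma horner_lagrange_Fp (i j : 'I_p) : (lagrange_Fp i).[j%:R] = (i == j)%:R.
Proof.
rewrite /lagrange_Fp !hornerE; have [<-|neq_ij] := eqVneq i j.
  by rewrite subrr expr0n /= -subn1 subn_eq0 leqNgt p_gt1 subr0.
set x : K := j%:R - i%:R; have x_neq0 : x != 0.
  by rewrite subr_eq0; apply: contra neq_ij => /eqP/natr_Fp_inj ->.
have x_fix : x ^+ p = x by rewrite -(pFrobenius_autE pcharK) rmorphB /= !pFrobenius_aut_nat.
suff -> : x ^+ p.-1 = 1 by rewrite subrr.
by apply: (mulfI x_neq0); rewrite mulr1 -exprS prednK ?x_fix // ltnW.
Qed.

Lemma dvdp_XpsubX_Fp (P : {poly K}) : (forall i : 'I_p, P.[i%:R] = 0) -> ('X^p - 'X) %| P.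
Proof.
move=> P_Fp; pose rs := [seq (i%:R : K) | i : 'I_p].
have rs_uniq : uniq_roots rs.
  by rewrite uniq_rootsE map_inj_uniq ?enum_uniq //; exact: natr_Fp_inj.
have rs_roots Q : (forall i : 'I_p, Q.[i%:R] = 0) -> all (root Q) rs.
  by move=> Q_Fp; apply/allP => _ /mapP[i _ ->]; apply/rootP.
have monic_XpX : 'X^p - 'X \is @monic K.
  by rewrite monicE lead_coefDl ?lead_coefXn // size_polyXn size_polyN size_polyX.
have <- : \prod_(x <- rs) ('X - x%:P) = 'X^p - 'X.
  apply/eqP; rewrite -eqp_monic ?monic_prod_XsubC // -dvdp_size_eqp.
    by rewrite size_prod_XsubC size_map size_enum_ord size_polyDl size_polyXn
      ?size_polyN ?size_polyX.
  by apply: uniq_roots_dvdp => //; apply: rs_roots => i; rewrite !hornerE natr_expp subrr.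
exact: uniq_roots_dvdp (rs_roots _ P_Fp) rs_uniq.
Qed.

End PrimeSubfield.

Section FrobeniusFixedElement.
Variables (K : fieldType) (p : nat) (A : algType K) (z : A).
Hypotheses (pcharK : p \in [pchar K]) (z_expp : z ^+ p = z).

Lemma horner_alg_Fp_eq (P Q : {poly K}) :
  (forall i : 'I_p, P.[i%:R] = Q.[i%:R]) -> horner_alg z P = horner_alg z Q.
Proof.
move=> eqPQ; apply/eqP; rewrite -subr_eq0 -rmorphB.
have /dvdpP[R ->] : ('X^p - 'X) %| P - Q.
  by apply: (dvdp_XpsubX_Fp pcharK) => i; rewrite hornerD hornerN eqPQ subrr.
by rewrite rmorphM rmorphB rmorphXn /= horner_algX z_expp subrr mulr0.
Qed.

Definition lagrange_idem (i : 'I_p) : A := horner_alg z (lagrange_Fp K p i).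

Lemma lagrange_idemM (i j : 'I_p) :
  lagrange_idem i * lagrange_idem j = (i == j)%:R *: lagrange_idem i.
Proof.
rewrite -mulr_algl -(horner_algC z) -!rmorphM; apply: horner_alg_Fp_eq => k.
rewrite !hornerM hornerC !(horner_lagrange_Fp pcharK).
by have [<-|_] := eqVneq i k; rewrite ?mul0r ?mulr0 // mul1r mulr1 eq_sym.
Qed.

Lemma sum_lagrange_idem : \sum_(i < p) lagrange_idem i = 1.
Proof.
rewrite -rmorph_sum -(rmorph1 (horner_alg z)); apply: horner_alg_Fp_eq => k.
rewrite horner_sum hornerC (bigD1 k) //= big1 => [|i /negPf neq_ik].
  by rewrite (horner_lagrange_Fp pcharK) eqxx addr0.
by rewrite (horner_lagrange_Fp pcharK) neq_ik.
Qed.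

Lemma mul_lagrange_idem (i : 'I_p) : z * lagrange_idem i = i%:R *: lagrange_idem i.
Proof.
rewrite -mulr_algl -(horner_algC z) -{1}(horner_algX z) -!rmorphM; apply: horner_alg_Fp_eq => k.
rewrite !hornerM hornerC hornerX (horner_lagrange_Fp pcharK).
by have [->|] := eqVneq i k; rewrite ?mulr0.
Qed.

Lemma sum_natr_lagrange_idem : \sum_(i < p) i%:R *: lagrange_idem i = z.
Proof.
rewrite -[RHS]mulr1 -sum_lagrange_idem mulr_sumr.
by apply: eq_bigr => i _; rewrite mul_lagrange_idem.
Qed.

Lemma commr_lagrange_idem (y : A) (i : 'I_p) :
  GRing.comm y z -> GRing.comm y (lagrange_idem i).
Proof.
by move=> yz; apply: commr_horner => // j; rewrite coef_map; apply: comm_alg.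
Qed.

End FrobeniusFixedElement.

Section AlgHom.
Variables (K : fieldType) (A C : algType K) (h : A -> C).
Hypothesis hom_h : is_alg_hom h.

Lemma alg_homD u v : h (u + v) = h u + h v.
Proof. by case: hom_h => lin_h _ _; rewrite -{1}[u]scale1r lin_h scale1r. Qed.

Lemma alg_hom0 : h 0 = 0.
Proof. by apply: (addIr (h 0)); rewrite -alg_homD !add0r. Qed.

Lemma alg_homZ a u : h (a *: u) = a *: h u.
Proof. by case: hom_h => lin_h _ _; rewrite -[a *: u]addr0 lin_h alg_hom0 addr0. Qed.

Lemma alg_homB u v : h (u - v) = h u - h v.
Proof. by rewrite alg_homD -scaleN1r alg_homZ scaleN1r. Qed.

Lemma alg_homM u v : h (u * v) = h u * h v.
Proof. by case: hom_h. Qed.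

Lemma alg_hom1 : h 1 = 1.
Proof. by case: hom_h. Qed.

Lemma alg_hom_alg a : h a%:A = a%:A.
Proof. by rewrite alg_homZ alg_hom1. Qed.

Lemma alg_homX u n : h (u ^+ n) = h u ^+ n.
Proof. by elim: n => [|n IH]; rewrite ?alg_hom1 // !exprS alg_homM IH. Qed.

Lemma alg_hom_sum (I : Type) (r : seq I) (P : pred I) (F : I -> A) :
  h (\sum_(i <- r | P i) F i) = \sum_(i <- r | P i) h (F i).
Proof. exact: (big_morph _ alg_homD alg_hom0). Qed.

Lemma alg_hom_horner_alg (z : A) (c : K) (P : {poly K}) :
  h z = c%:A -> h (horner_alg z P) = P.[c]%:A.
Proof.
move=> hz; elim/poly_ind: P => [|P d IH]; first by rewrite rmorph0 alg_hom0 horner0 scale0r.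
rewrite rmorphD rmorphM /= horner_algX horner_algC alg_homD alg_homM IH hz alg_hom_alg.
by rewrite hornerMXaddC mulr_algl scalerA scalerDl.
Qed.

End AlgHom.

Lemma alg_hom_id (K : fieldType) (A : algType K) : is_alg_hom (@id A).
Proof. by []. Qed.

Lemma alg_hom_comp (K : fieldType) (A C D : algType K) (h : A -> C) (h' : C -> D) :
  is_alg_hom h -> is_alg_hom h' -> is_alg_hom (h' \o h).
Proof.
move=> hom_h hom_h'; split=> [a u v | u v |] /=.
- by rewrite (alg_homD hom_h) (alg_homZ hom_h) (alg_homD hom_h') (alg_homZ hom_h').
- by rewrite (alg_homM hom_h) (alg_homM hom_h').
- by rewrite (alg_hom1 hom_h) (alg_hom1 hom_h').
Qed.

Section EnvMap.
Variables (K : fieldType) (V : vectType K) (br : V -> V -> V) (A : algType K) (f : V -> A).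
Hypothesis env_f : env_map br f.

Lemma env_mapD u v : f (u + v) = f u + f v.
Proof. by case: env_f => lin_f _; rewrite -{1}[u]scale1r lin_f scale1r. Qed.

Lemma env_map0 : f 0 = 0.
Proof. by apply: (addIr (f 0)); rewrite -env_mapD !add0r. Qed.

Lemma env_mapZ a u : f (a *: u) = a *: f u.
Proof. by case: env_f => lin_f _; rewrite -[a *: u]addr0 lin_f env_map0 addr0. Qed.

Lemma env_map_br x y : f (br x y) = f x * f y - f y * f x.
Proof. by case: env_f. Qed.

Lemma env_map_comp (C : algType K) (h : A -> C) : is_alg_hom h -> env_map br (h \o f).
Proof.
move=> hom_h; split=> [a x y | x y] /=; case: env_f => lin_f br_f.
  by rewrite lin_f (alg_homD hom_h) (alg_homZ hom_h).
by rewrite br_f (alg_homB hom_h) !(alg_homM hom_h).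
Qed.

End EnvMap.

Lemma reduced_rel_comp (K : fieldType) (p : nat) (V : vectType K) (pm : V -> V)
    (xi : V -> K) (A C : algType K) (f : V -> A) (h : A -> C) :
  reduced_rel p pm xi f -> is_alg_hom h -> reduced_rel p pm xi (h \o f).
Proof.
by move=> red_f hom_h x /=; rewrite -(alg_homX hom_h) -(alg_homB hom_h) red_f alg_hom_alg.
Qed.

Section UniversalProperty.
Variables (K : fieldType) (p : nat) (V : vectType K) (br : V -> V -> V) (pm : V -> V).
Variables (xi : V -> K) (A : algType K) (f : V -> A).
Hypothesis univ_f : is_reduced_env p br pm xi f.

Lemma reduced_env_homE (C : algType K) (h1 h2 : A -> C) :
  is_alg_hom h1 -> is_alg_hom h2 -> (forall x, h1 (f x) = h2 (f x)) -> h1 =1 h2.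
Proof.
case: univ_f => env_f red_f univ hom1 hom2 eq12 u.
have [h [_ _ h_uniq]] := univ C (h2 \o f) (env_map_comp env_f hom2) (reduced_rel_comp red_f hom2).
by rewrite (h_uniq h1) // (h_uniq h2).
Qed.

Section Lift.
Variables (C : algType K) (g : V -> C).
Hypotheses (env_g : env_map br g) (red_g : reduced_rel p pm xi g).

Lemma reduced_env_lift_spec : {h : A -> C | is_alg_hom h & forall x, h (f x) = g x}.
Proof.
case: univ_f => _ _ /(_ C g env_g red_g)/constructive_indefinite_description[h [hom_h hf _]].
by exists h.
Qed.

Definition reduced_env_lift : A -> C := s2val reduced_env_lift_spec.

Lemma reduced_env_lift_alg_hom : is_alg_hom reduced_env_lift.
Proof. exact: s2valP reduced_env_lift_spec. Qed.

Lemma reduced_env_liftE x : reduced_env_lift (f x) = g x.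
Proof. exact: (s2valP' reduced_env_lift_spec). Qed.

End Lift.
End UniversalProperty.

Section Corner.
Variables (K : fieldType) (A : algType K).

Record nz_idem := NzIdem {
  idem_val :> A;
  idem_valK : idem_val * idem_val = idem_val;
  idem_val_neq0 : idem_val != 0 }.

Variable E : nz_idem.
Local Notation e := (idem_val E).

Lemma idem_valX n : (0 < n)%N -> e ^+ n = e.
Proof. by case: n => // n _; elim: n => // n IH; rewrite exprS IH idem_valK. Qed.

Definition in_corner (u : A) : bool := e * u * e == u.

Fact in_corner_submod_closed : submod_closed in_corner.
Proof.
split=> [|a u v]; rewrite !unfold_in /= ?mulr0 ?mul0r // => /eqP eu /eqP ev.
by rewrite mulrDr mulrDl -scalerAr -scalerAl eu ev.
Qed.

HB.instance Definition _ := GRing.isSubmodClosed.Build K A in_corner in_corner_submod_closed.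

(* The corner e A e has unit e, not 1, so it is not a subalgebra of A in the sense of
   ssralg: only its module structure is inherited, its ring structure is built by hand. *)
Record corner := Corner { cval : A; cvalP : in_corner cval }.
HB.instance Definition _ := [isSub for cval].
HB.instance Definition _ := [Choice of corner by <:].
HB.instance Definition _ := [SubChoice_isSubLmodule of corner by <:].

Lemma cvalD (c d : corner) : cval (c + d) = cval c + cval d.
Proof. exact: (raddfD val). Qed.

Lemma cvalB (c d : corner) : cval (c - d) = cval c - cval d.
Proof. exact: (raddfB val). Qed.

Lemma cvalZ a (c : corner) : cval (a *: c) = a *: cval c.
Proof. by []. Qed.

Lemma cval0 : cval 0 = 0.
Proof. exact: (raddf0 val). Qed.

Lemma cvalE (c : corner) : e * cval c * e = cval c.
Proof. exact/eqP/cvalP. Qed.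

Lemma mulr_idem_cval (c : corner) : e * cval c = cval c.
Proof. by rewrite -cvalE !mulrA idem_valK. Qed.

Lemma mulr_cval_idem (c : corner) : cval c * e = cval c.
Proof. by rewrite -cvalE -!mulrA idem_valK. Qed.

Fact in_corner_idem : in_corner e.
Proof. by rewrite /in_corner !idem_valK. Qed.

Fact in_corner_mul (c d : corner) : in_corner (cval c * cval d).
Proof. by rewrite /in_corner mulrA mulr_idem_cval -mulrA mulr_cval_idem. Qed.

Definition corner_one := Corner in_corner_idem.
Definition corner_mul (c d : corner) := Corner (in_corner_mul c d).

Lemma cval_inj : injective cval. Proof. exact: val_inj. Qed.
Lemma cval_mul (c d : corner) : cval (corner_mul c d) = cval c * cval d. Proof. by []. Qed.

Lemma corner_mulA : associative corner_mul.
Proof. by move=> c d k; apply: cval_inj; rewrite !cval_mul mulrA. Qed.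
Lemma corner_mul1r : left_id corner_one corner_mul.
Proof. by move=> c; apply: cval_inj; rewrite cval_mul mulr_idem_cval. Qed.
Lemma corner_mulr1 : right_id corner_one corner_mul.
Proof. by move=> c; apply: cval_inj; rewrite cval_mul mulr_cval_idem. Qed.
Lemma corner_mulDl : left_distributive corner_mul +%R.
Proof. by move=> c d k; apply: cval_inj; rewrite cvalD !cval_mul cvalD mulrDl. Qed.
Lemma corner_mulDr : right_distributive corner_mul +%R.
Proof. by move=> c d k; apply: cval_inj; rewrite cvalD !cval_mul cvalD mulrDr. Qed.
Lemma corner_one_neq0 : corner_one != 0.
Proof. by apply: contraNneq (idem_val_neq0 E) => /(congr1 cval); rewrite cval0 => <-. Qed.

HB.instance Definition _ := GRing.Zmodule_isNzRing.Build corner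
  corner_mulA corner_mul1r corner_mulr1 corner_mulDl corner_mulDr corner_one_neq0.

Lemma corner_scalerAl (a : K) (c d : corner) : a *: (c * d) = (a *: c) * d.
Proof. by apply: cval_inj; rewrite cvalZ !cval_mul cvalZ scalerAl. Qed.
HB.instance Definition _ := GRing.Lmodule_isLalgebra.Build K corner corner_scalerAl.

Lemma corner_scalerAr (a : K) (c d : corner) : a *: (c * d) = c * (a *: d).
Proof. by apply: cval_inj; rewrite cvalZ !cval_mul cvalZ scalerAr. Qed.
HB.instance Definition _ := GRing.Lalgebra_isAlgebra.Build K corner corner_scalerAr.

Lemma cvalM (c d : corner) : cval (c * d) = cval c * cval d. Proof. by []. Qed.
Lemma cval1 : cval (1 : corner) = e. Proof. by []. Qed.

Lemma cvalX (c : corner) n : (0 < n)%N -> cval (c ^+ n) = cval c ^+ n.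
Proof.
case: n => // n _; elim: n => [|n IH]; first by rewrite !expr1.
by rewrite exprS cvalM IH -exprS.
Qed.

Fact in_corner_sandwich (u : A) : in_corner (e * u * e).
Proof. by rewrite /in_corner !mulrA idem_valK -!mulrA idem_valK. Qed.

Definition corner_of (u : A) : corner := Corner (in_corner_sandwich u).

Lemma cval_corner_of u : cval (corner_of u) = e * u * e.
Proof. by []. Qed.

End Corner.

Lemma cval_mul_orth (K : fieldType) (A : algType K) (E F : nz_idem A)
    (c : corner E) (d : corner F) :
  (E : A) * (F : A) = 0 -> cval c * cval d = 0.
Proof.
move=> EF0; rewrite -(mulr_cval_idem c) -(mulr_idem_cval d) mulrA -(mulrA _ (E : A)) EF0.
by rewrite mulr0 mul0r.
Qed.

Lemma sum_corners_alg_hom (K : fieldType) (A R : algType K) (I : finType)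
    (E : I -> nz_idem A) (h : forall i, R -> corner (E i)) :
    (forall i j, i != j -> (E i : A) * (E j : A) = 0) -> \sum_i (E i : A) = 1 ->
    (forall i, is_alg_hom (h i)) ->
  is_alg_hom (fun r => \sum_i cval (h i r)).
Proof.
move=> orthE sumE hom_h; split=> [a u v | u v |].
- rewrite scaler_sumr -big_split; apply: eq_bigr => i _ /=.
  by rewrite (alg_homD (hom_h i)) (alg_homZ (hom_h i)) cvalD cvalZ.
- rewrite mulr_suml; apply: eq_bigr => i _; rewrite mulr_sumr (bigD1 i) //= big1 ?addr0.
    by rewrite (alg_homM (hom_h i)) cvalM.
  by move=> j neq_ji; apply: cval_mul_orth; rewrite orthE // eq_sym.
- by rewrite -sumE; apply: eq_bigr => i _; rewrite (alg_hom1 (hom_h i)) cval1.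
Qed.

Lemma commutatorD_alg (K : fieldType) (B : algType K) (x y : B) (a b : K) :
  (x + a%:A) * (y + b%:A) - (y + b%:A) * (x + a%:A) = x * y - y * x.
Proof.
rewrite mulrDl [_ * (x + _)]mulrDr opprD addrACA (comm_alg a) subrr addr0.
by rewrite mulrDr mulrDl opprD addrACA (comm_alg b) subrr addr0.
Qed.

Lemma exprp_addr_alg (K : fieldType) (p : nat) (B : algType K) (x : B) (c : K) :
  p \in [pchar K] -> (x + c%:A) ^+ p = x ^+ p + (c ^+ p)%:A.
Proof.
move=> pcharK; have pcharB : p \in [pchar B] by rewrite (pchar_lalg B).
rewrite -!(pFrobenius_autE pcharB) pFrobenius_autD_comm; last exact/esym/comm_alg.
by rewrite !pFrobenius_autE exprZn expr1n.
Qed.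

Section ShiftGenerators.
Variables (K : fieldType) (p : nat) (L : vectType K) (br : L -> L -> L) (pm : L -> L).
Variables (chi : {scalar L}) (B : algType K) (g : L -> B) (c : K).

Definition shift_gen (u : (L * K^o)%type) : B := g u.1 + (u.2 * c)%:A.

Lemma env_map_shift_gen : env_map br g -> env_map (br_chi br) shift_gen.
Proof.
move=> env_g; split=> [a u v | u v]; rewrite /shift_gen /=.
  rewrite (env_mapD env_g) (env_mapZ env_g) -[a *: u.2]/(a * u.2) mulrDl scalerDl.
  by rewrite -mulrA -scalerA scalerDr addrACA.
by rewrite mul0r scale0r addr0 commutatorD_alg (env_map_br env_g).
Qed.

Lemma reduced_rel_shift_gen :
    p \in [pchar K] -> c ^+ p = c -> reduced_rel p pm (fun x => c * chi x) g ->
  reduced_rel p (pm_chi p pm chi) (fun _ => 0) shift_gen.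
Proof.
move=> pcharK c_fix red_g [x a]; rewrite /shift_gen /pm_chi /= exprp_addr_alg //.
rewrite opprD addrACA red_g -scalerBl -scalerDl !exprMn c_fix.
rewrite expr0n eqn0Ngt prime_gt0 ?(pcharf_prime pcharK) //=.
by congr (_ *: _); ring.
Qed.

End ShiftGenerators.

Lemma lie_br0r (K : fieldType) (V : vectType K) (br : V -> V -> V) (x : V) :
  is_lie_bracket br -> br x 0 = 0.
Proof.
case=> _ lin_r _ _; have := lin_r 1 0 0 x; rewrite !scale1r addr0 => br0.
by apply: (addrI (br x 0)); rewrite addr0 -br0.
Qed.

Section Decomposition.
Variables (K : fieldType) (p : nat) (L : vectType K) (br : L -> L -> L) (pm : L -> L).
Variables (chi : {scalar L}) (A : algType K) (f : (L * K^o)%type -> A).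
Variables (B : 'I_p -> algType K) (g : forall i : 'I_p, L -> B i).
Hypotheses (pcharK : p \in [pchar K]) (restr : is_restricted p br pm).
Hypothesis univ_f : is_reduced_env p (br_chi br) (pm_chi p pm chi) (fun _ => 0) f.
Hypothesis univ_g : forall i : 'I_p, is_reduced_env p br pm (fun x => i%:R * chi x) (g i).

Implicit Types i j : 'I_p.

Let p_gt0 : (0 < p)%N := prime_gt0 (pcharf_prime pcharK).
Let env_f : env_map (br_chi br) f. Proof. by case: univ_f. Qed.
Let red_f : reduced_rel p (pm_chi p pm chi) (fun _ => 0) f. Proof. by case: univ_f. Qed.
Let env_g i : env_map br (g i). Proof. by case: (univ_g i). Qed.
Let red_g i : reduced_rel p pm (fun x => i%:R * chi x) (g i). Proof. by case: (univ_g i). Qed.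

Local Notation z := (f (0, 1)).

Lemma f_pair x a : f (x, a) = f (x, 0) + a *: z.
Proof.
rewrite -(env_mapZ env_f) -(env_mapD env_f); congr f.
by rewrite [RHS]surjective_pairing /= scaler0 addr0 add0r -[a%:A]/(a * 1) mulr1.
Qed.

Lemma commr_f_z u : GRing.comm (f u) z.
Proof.
apply/eqP; rewrite -subr_eq0 -(env_map_br env_f) /br_chi /= lie_br0r; last by case: restr.
exact/eqP/(env_map0 env_f).
Qed.

Lemma z_expp : z ^+ p = z.
Proof.
have pm0 : pm 0 = 0.
  by case: restr => _ _ homog _; rewrite -(scale0r 0) homog expr0n eqn0Ngt p_gt0 !scale0r.
have := red_f (0, 1); rewrite /pm_chi /= pm0 raddf0 expr0n eqn0Ngt p_gt0 expr1n add0r.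
by rewrite scale0r => /subr0_eq.
Qed.

Lemma f_expp x : f (x, 0) ^+ p = f (pm x, 0) + chi x ^+ p *: z.
Proof.
have := red_f (x, 0); rewrite /pm_chi /= expr0n eqn0Ngt p_gt0 addr0 scale0r.
by move=> /subr0_eq ->; rewrite [LHS]f_pair.
Qed.

Local Notation e i := (@lagrange_idem _ p _ z i).

Lemma commr_lagrange_idem_f i u : GRing.comm (e i) (f u).
Proof. exact/commr_sym/commr_lagrange_idem/commr_f_z. Qed.

Definition Phi (i : 'I_p) : A -> B i :=
  reduced_env_lift univ_f (env_map_shift_gen i%:R (env_g i))
    (reduced_rel_shift_gen pcharK (natr_expp pcharK i) (red_g i)).

Lemma Phi_alg_hom i : is_alg_hom (Phi i).
Proof. exact: reduced_env_lift_alg_hom. Qed.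

Lemma Phi_f i u : Phi i (f u) = g i u.1 + (u.2 * i%:R)%:A.
Proof. exact: reduced_env_liftE. Qed.

Lemma Phi_z i : Phi i z = i%:R%:A.
Proof. by rewrite Phi_f /= (env_map0 (env_g i)) add0r mul1r. Qed.

Lemma Phi_lagrange_idem i j : Phi j (e i) = (i == j)%:R%:A.
Proof. by rewrite (alg_hom_horner_alg (Phi_alg_hom j) _ (Phi_z j)) horner_lagrange_Fp. Qed.

Lemma lagrange_idem_neq0 i : e i != 0.
Proof.
apply: contra_neq (oner_neq0 (B i)) => ei0.
by move: (Phi_lagrange_idem i i); rewrite ei0 (alg_hom0 (Phi_alg_hom i)) eqxx scale1r => ->.
Qed.

Lemma lagrange_idemK i : e i * e i = e i.
Proof. by rewrite (lagrange_idemM pcharK z_expp) eqxx scale1r. Qed.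

Definition block_idem i : nz_idem A := NzIdem (lagrange_idemK i) (lagrange_idem_neq0 i).

Definition block_gen i (x : L) : corner (block_idem i) := corner_of (block_idem i) (f (x, 0)).

Lemma cval_block_gen i x : cval (block_gen i x) = e i * f (x, 0).
Proof. by rewrite cval_corner_of /= -mulrA -commr_lagrange_idem_f mulrA lagrange_idemK. Qed.

Lemma mulr_block_f i u v : e i * f u * (e i * f v) = e i * (f u * f v).
Proof.
by rewrite !mulrA -(mulrA _ (f u)) -commr_lagrange_idem_f mulrA lagrange_idemK -!mulrA.
Qed.

Lemma env_map_block_gen i : env_map br (block_gen i).
Proof.
have f_lin a x y : f (a *: x + y, 0) = a *: f (x, 0) + f (y, 0).
  rewrite -(env_mapZ env_f) -(env_mapD env_f); congr f.
  by rewrite [RHS]surjective_pairing /= scaler0 addr0.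
split=> [a x y | x y]; apply: cval_inj.
  by rewrite cvalD cvalZ !cval_block_gen f_lin mulrDr scalerAr.
rewrite cvalB !cvalM !cval_block_gen !mulr_block_f -mulrBr.
by rewrite -(env_map_br env_f (x, 0) (y, 0)).
Qed.

Lemma reduced_rel_block_gen i : reduced_rel p pm (fun x => i%:R * chi x) (block_gen i).
Proof.
move=> x; apply: cval_inj; rewrite cvalB cvalX // cvalZ cval1 !cval_block_gen.
rewrite exprMn_comm; last exact: commr_lagrange_idem_f.
rewrite (idem_valX (block_idem i)) // -mulrBr f_expp addrAC subrr add0r -scalerAr.
rewrite commr_lagrange_idem_f (mul_lagrange_idem pcharK z_expp) scalerA.
by rewrite exprMn (natr_expp pcharK) mulrC.
Qed.

Definition Psi_block i : B i -> corner (block_idem i) :=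
  reduced_env_lift (univ_g i) (env_map_block_gen i) (reduced_rel_block_gen i).
Arguments Psi_block : clear implicits.

Lemma Psi_block_alg_hom i : is_alg_hom (Psi_block i).
Proof. exact: reduced_env_lift_alg_hom. Qed.

Lemma Psi_block_g i x : Psi_block i (g i x) = block_gen i x.
Proof. exact: reduced_env_liftE. Qed.

Definition Psi (b : forall i, B i) : A := \sum_i cval (Psi_block i (b i)).

Lemma Phi_cval_alg_hom j : is_alg_hom (fun c : corner (block_idem j) => Phi j (cval c)).
Proof.
have hom_Phi := Phi_alg_hom j; split=> [a c d | c d |].
- by rewrite cvalD cvalZ (alg_homD hom_Phi) (alg_homZ hom_Phi).
- by rewrite cvalM (alg_homM hom_Phi).
- by rewrite cval1 Phi_lagrange_idem eqxx scale1r.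
Qed.

Lemma Phi_Psi_block j u : Phi j (cval (Psi_block j u)) = u.
Proof.
have hom := alg_hom_comp (Psi_block_alg_hom j) (Phi_cval_alg_hom j).
apply: (reduced_env_homE (univ_g j) hom (alg_hom_id _)) => x /=.
rewrite Psi_block_g cval_block_gen (alg_homM (Phi_alg_hom j)) Phi_lagrange_idem eqxx scale1r.
by rewrite mul1r Phi_f mul0r scale0r addr0.
Qed.

Lemma Phi_cval_orth i j (c : corner (block_idem i)) : i != j -> Phi j (cval c) = 0.
Proof.
move=> neq_ij; rewrite -mulr_idem_cval (alg_homM (Phi_alg_hom j)) Phi_lagrange_idem.
by rewrite (negPf neq_ij) scale0r mul0r.
Qed.

Lemma Phi_Psi b j : Phi j (Psi b) = b j.
Proof.
rewrite /Psi (alg_hom_sum (Phi_alg_hom j)) (bigD1 j) //= Phi_Psi_block big1 ?addr0 //.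
by move=> i; apply: Phi_cval_orth.
Qed.

Lemma Psi_Phi a : Psi (fun i => Phi i a) = a.
Proof.
have hom : is_alg_hom (fun a => Psi (fun i => Phi i a)).
  apply: sum_corners_alg_hom => [i j neq_ij | | i].
  - by rewrite /= (lagrange_idemM pcharK z_expp) (negPf neq_ij) scale0r.
  - exact: (sum_lagrange_idem pcharK z_expp).
  - exact: alg_hom_comp (Phi_alg_hom i) (Psi_block_alg_hom i).
apply: (reduced_env_homE univ_f hom (alg_hom_id A)) => -[x c] /=.
rewrite /Psi [RHS]f_pair.
under eq_bigr do rewrite Phi_f (alg_homD (Psi_block_alg_hom _)) (alg_hom_alg (Psi_block_alg_hom _)).
under eq_bigr do rewrite Psi_block_g cvalD cvalZ cval1 cval_block_gen.
rewrite big_split /= -mulr_suml (sum_lagrange_idem pcharK z_expp) mul1r.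
congr (_ + _); rewrite -[in RHS](sum_natr_lagrange_idem pcharK z_expp) scaler_sumr.
by apply: eq_bigr => i _; rewrite scalerA.
Qed.

Lemma Phi_inj a a' : (forall i, Phi i a = Phi i a') -> a = a'.
Proof.
by move=> eq_Phi; rewrite -(Psi_Phi a) -(Psi_Phi a'); apply: eq_bigr => i _; rewrite eq_Phi.
Qed.

End Decomposition.

Theorem corollary1p3p5 (K : closedFieldType) (p : nat) (pchar_p : p \in [pchar K])
  (L : vectType K) (br : L -> L -> L) (pm : L -> L)
  (restr : is_restricted p br pm)
  (chi : {scalar L})
  (* A = u(l_chi) *)
  (A : algType K) (f : (L * K^o)%type -> A)
  (hA : is_reduced_env p (br_chi br) (pm_chi p pm chi) (fun _ => 0) f)
  (* B i = U_{i chi}(l), i ranging over the prime field F = {0,...,p-1} *)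
  (B : 'I_p -> algType K) (g : forall i : 'I_p, L -> B i)
  (hB : forall i : 'I_p, is_reduced_env p br pm (fun x => (i%:R : K) * chi x) (g i)) :
  exists phi : forall i : 'I_p, A -> B i,
    [/\ (forall i, is_alg_hom (phi i)),
        (forall a a' : A, (forall i, phi i a = phi i a') -> a = a') &
        (forall b : forall i : 'I_p, B i, exists a : A, forall i, phi i a = b i)].
Proof.
exists (Phi pchar_p hA hB); split.
- exact: Phi_alg_hom.
- by move=> a a'; exact: (Phi_inj restr).
- by move=> b; exists (Psi pchar_p restr hA hB b) => i; apply: Phi_Psi.
Qed.
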